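(* Let $S_1=(x_1,y_1),S_2=(x_2,y_2),S_3=(x_3,y_3),S_4=(x_4,y_4)$ be four points in the plane with $x_1\le x_2\le x_3\le x_4$. Let $\delta_1,\delta_2,\delta_3,\delta_4$ be positive integers, where $\delta_j$ is the number of times $S_j$ occurs in the data. For $i\in\{1,\dots,4\}$ define the pivot point $P_i=(\tilde x_i,\tilde y_i)$ by $$\tilde x_i=x_i+\frac{\sum_{j=1}^4\delta_j(x_j-x_i)^2}{\sum_{j=1}^4\delta_j(x_j-x_i)},\qquad \tilde y_i=y_i+\frac{\sum_{j=1}^4\delta_j(x_j-x_i)(y_j-y_i)}{\sum_{j=1}^4\delta_j(x_j-x_i)},$$ whenever the denominator is nonzero. Then, whenever defined, $P_4$ lies in the closed triangle (convex hull) with vertices $S_1,S_2,S_3$, and $P_1$ lies in the closed triangle (convex hull) with vertices $S_2,S_3,S_4$. That is, the pivot points of an outermost point on the $x$-axis lie in the triangle formed by the other three points.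
   Context: The pivot point $P_i$ is the point through which the least-squares regression line of the data, in which each $S_j$ appears $\delta_j$ times, always passes regardless of how many additional copies of $S_i$ are added. It is considered undefined (at infinity) when $\sum_j\delta_j(x_j-x_i)=0$. *)

From mathcomp Require Import all_boot all_order all_algebra.
Set Implicit Arguments. Unset Strict Implicit. Unset Printing Implicit Defensive.
Import Order.TTheory GRing.Theory Num.Theory.
Local Open Scope ring_scope.

(* Data: four points S_j = (x j, y j), j : 'I_4 (0-based: S_1 = index 0),
   with multiplicities d j : nat (positive). *)

Definition pivot_den (R : realFieldType) (x : 'I_4 -> R) (d : 'I_4 -> nat)
  (i : 'I_4) : R := \sum_(j < 4) (d j)%:R * (x j - x i).

Definition pivot_x (R : realFieldType) (x : 'I_4 -> R) (d : 'I_4 -> nat)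
  (i : 'I_4) : R :=
  x i + (\sum_(j < 4) (d j)%:R * (x j - x i) ^+ 2) / pivot_den x d i.

Definition pivot_y (R : realFieldType) (x y : 'I_4 -> R) (d : 'I_4 -> nat)
  (i : 'I_4) : R :=
  y i + (\sum_(j < 4) (d j)%:R * (x j - x i) * (y j - y i)) / pivot_den x d i.

Definition in_triangle (R : realFieldType) (px py ax ay bx by_ cx cy : R) : Prop :=
  exists a b c : R, [/\ 0 <= a, 0 <= b, 0 <= c & a + b + c = 1] /\
    px = a * ax + b * bx + c * cx /\ py = a * ay + b * by_ + c * cy.

Definition s1 : 'I_4 := @Ordinal 4 0 isT.
Definition s2 : 'I_4 := @Ordinal 4 1 isT.
Definition s3 : 'I_4 := @Ordinal 4 2 isT.
Definition s4 : 'I_4 := @Ordinal 4 3 isT.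

From mathcomp Require Import all_boot all_order all_algebra.
Import Order.TTheory GRing.Theory Num.Theory.
Local Open Scope ring_scope.

(* The pivot point P_i is the weighted average of the data points with weights
   w_j = d_j (x_j - x_i) / sum_k d_k (x_k - x_i): these sum to 1 and vanish at
   j = i.  When S_i is outermost on the x-axis, all the x_j - x_i have the same
   sign, so the weights are nonnegative and P_i is a convex combination of the
   three other points. *)

Section PivotWeights.

Variables (R : realFieldType) (x : 'I_4 -> R) (d : 'I_4 -> nat) (i : 'I_4).

Definition pivot_weight (j : 'I_4) : R :=
  (d j)%:R * (x j - x i) / pivot_den x d i.

Lemma pivot_weight_id : pivot_weight i = 0.
Proof. by rewrite /pivot_weight subrr mulr0 mul0r. Qed.

Lemma sum_pivot_weight : pivot_den x d i != 0 -> \sum_j pivot_weight j = 1.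
Proof. by move=> D0; rewrite -mulr_suml divff. Qed.

Lemma pivot_weight_average (z : 'I_4 -> R) : pivot_den x d i != 0 ->
  z i + (\sum_(j < 4) (d j)%:R * (x j - x i) * (z j - z i)) / pivot_den x d i
  = \sum_j pivot_weight j * z j.
Proof.
move=> D0.
have -> : \sum_j pivot_weight j * z j
          = (\sum_j pivot_weight j) * z i + \sum_j pivot_weight j * (z j - z i).
  rewrite mulr_suml -big_split; apply: eq_bigr => j _ /=.
  by rewrite -mulrDr addrC subrK.
rewrite sum_pivot_weight // mul1r mulr_suml.
by congr (_ + _); apply: eq_bigr => j _; rewrite /pivot_weight mulrAC.
Qed.

Lemma pivot_xE : pivot_den x d i != 0 -> pivot_x x d i = \sum_j pivot_weight j * x j.
Proof.
move=> D0; rewrite -pivot_weight_average //.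
by congr (_ + _ / _); apply: eq_bigr => j _; rewrite mulrA.
Qed.

Lemma pivot_yE (y : 'I_4 -> R) :
  pivot_den x d i != 0 -> pivot_y x y d i = \sum_j pivot_weight j * y j.
Proof. exact: pivot_weight_average. Qed.

Lemma pivot_weight_ge0_min : (forall j, x i <= x j) -> forall j, 0 <= pivot_weight j.
Proof.
move=> xi_min j.
have term_ge0 k : 0 <= (d k)%:R * (x k - x i) by rewrite mulr_ge0 ?subr_ge0.
by rewrite divr_ge0 // sumr_ge0.
Qed.

Lemma pivot_weight_ge0_max : (forall j, x j <= x i) -> forall j, 0 <= pivot_weight j.
Proof.
move=> xi_max j.
have term_le0 k : (d k)%:R * (x k - x i) <= 0 by rewrite mulr_ge0_le0 ?subr_le0.
rewrite /pivot_weight -mulrNN -invrN.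
by rewrite divr_ge0 // oppr_ge0 ?sumr_le0.
Qed.

End PivotWeights.

Lemma big_ord4 (V : nmodType) (F : 'I_4 -> V) :
  \sum_(j < 4) F j = F s1 + F s2 + F s3 + F s4.
Proof.
rewrite !big_ord_recl big_ord0 addr0 !addrA.
by congr (_ + _ + _ + _); congr F; apply: val_inj.
Qed.

Lemma ord4_ind (P : 'I_4 -> Prop) :
  P s1 -> P s2 -> P s3 -> P s4 -> forall j, P j.
Proof.
move=> P1 P2 P3 P4 [[|[|[|[|//]]]] lt_j4];
  [move: P1 | move: P2 | move: P3 | move: P4]; congr P; exact: val_inj.
Qed.

Section ConvexCombination.

Variables (R : realFieldType) (w x y : 'I_4 -> R).
Hypotheses (w_ge0 : forall j, 0 <= w j) (w_sum : \sum_j w j = 1).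

Lemma in_triangle_s4_out : w s4 = 0 ->
  in_triangle (\sum_j w j * x j) (\sum_j w j * y j)
    (x s1) (y s1) (x s2) (y s2) (x s3) (y s3).
Proof.
move=> w4; have := w_sum; rewrite big_ord4 w4 addr0 => w_sum3.
exists (w s1), (w s2), (w s3); rewrite !big_ord4 w4 !mul0r !addr0.
by do !split.
Qed.

Lemma in_triangle_s1_out : w s1 = 0 ->
  in_triangle (\sum_j w j * x j) (\sum_j w j * y j)
    (x s2) (y s2) (x s3) (y s3) (x s4) (y s4).
Proof.
move=> w1; have := w_sum; rewrite big_ord4 w1 add0r => w_sum3.
exists (w s2), (w s3), (w s4); rewrite !big_ord4 w1 !mul0r !add0r.
by do !split.
Qed.

End ConvexCombination.

Theorem proposition2 (R : realFieldType) (x y : 'I_4 -> R) (d : 'I_4 -> nat) :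
  (forall j, (0 < d j)%N) ->
  x s1 <= x s2 -> x s2 <= x s3 -> x s3 <= x s4 ->
  (pivot_den x d s4 != 0 ->
     in_triangle (pivot_x x d s4) (pivot_y x y d s4)
       (x s1) (y s1) (x s2) (y s2) (x s3) (y s3)) /\
  (pivot_den x d s1 != 0 ->
     in_triangle (pivot_x x d s1) (pivot_y x y d s1)
       (x s2) (y s2) (x s3) (y s3) (x s4) (y s4)).
Proof.
move=> _ x12 x23 x34.
have x13 := le_trans x12 x23; have x24 := le_trans x23 x34.
have x14 := le_trans x13 x34.
have x1_min j : x s1 <= x j by elim/ord4_ind: j.
have x4_max j : x j <= x s4 by elim/ord4_ind: j.
split=> D0; rewrite pivot_xE // pivot_yE //.
- apply: in_triangle_s4_out; last exact: pivot_weight_id.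
  + exact: pivot_weight_ge0_max.
  + exact: sum_pivot_weight.
- apply: in_triangle_s1_out; last exact: pivot_weight_id.
  + exact: pivot_weight_ge0_min.
  + exact: sum_pivot_weight.
Qed.
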